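(* Let $S$ be a $\Gamma$-semiring with zero having a left unity and a right unity, and let $L$ be its left operator semiring. Then the map $\sigma\mapsto\sigma^{+'}$ is an inclusion preserving bijection from the set $FI(S)$ of fuzzy ideals of $S$ onto the set $FI(L)$ of fuzzy ideals of $L$, and it is an isomorphism of the lattices $(FI(S),\oplus,\cap)$ and $(FI(L),\oplus,\cap)$. Likewise, $\sigma\mapsto\sigma^{+'}$ gives a lattice isomorphism, via an inclusion preserving bijection, between the fuzzy right ideals of $S$ and the fuzzy right ideals of $L$.
   Context: A $\Gamma$-semiring: $S$ and $\Gamma$ are additive commutative semigroups with a map $S\times\Gamma\times S\to S$, $(a,\alpha,b)\mapsto a\alpha b$, such that $(a+b)\alpha c=a\alpha c+b\alpha c$, $a\alpha(b+c)=a\alpha b+a\alpha c$, $a(\alpha+\beta)b=a\alpha b+a\beta b$, $a\alpha(b\beta c)=(a\alpha b)\beta c$. With zero: $(S,+)$, $(\Gamma,+)$ are monoids, $0_S\alpha x=0_S=x\alpha0_S$, $x0_\Gamma y=0_S$. Left operator semiring $L$: $F$ is the free additive commutative semigroup on $S\times\Gamma$; $\sum_i(x_i,\alpha_i)\,\rho\,\sum_j(y_j,\beta_j)$ iff $\sum_ix_i\alpha_ia=\sum_jy_j\beta_ja$ for all $a\in S$; $L=F/\rho$, classes written $\sum_i[x_i,\alpha_i]$, multiplication $(\sum_i[x_i,\alpha_i])(\sum_j[y_j,\beta_j])=\sum_{i,j}[x_i\alpha_iy_j,\beta_j]$; its zero is $[0,\gamma]$. A left unity of $S$ is $\sum_i[e_i,\delta_i]\in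 L$ with $\sum_ie_i\delta_ia=a$ for all $a$; a right unity is a finite family $\gamma_j\in\Gamma,f_j\in S$ with $\sum_ja\gamma_jf_j=a$ for all $a$. Fuzzy subset: map into $[0,1]$. A fuzzy right ideal of $S$: fuzzy subset $\mu$, not identically $0$, with $\mu(x+y)\ge\min[\mu(x),\mu(y)]$ and $\mu(x\gamma y)\ge\mu(x)$ for all $x,y\in S,\gamma\in\Gamma$; a fuzzy left ideal: same with $\mu(x\gamma y)\ge\mu(y)$; a fuzzy ideal: both. For the semiring $L$ analogously with $\mu(pq)\ge\mu(p)$ (right), $\mu(pq)\ge\mu(q)$ (left). Convention: all these fuzzy (left/right) ideals satisfy $\mu(0)=1$. For a fuzzy subset $\sigma$ of $S$: $\sigma^{+'}(\sum_i[x_i,\alpha_i])=\inf_{s\in S}\sigma(\sum_ix_i\alpha_is)$. $(\mu_1\oplus\mu_2)(x)=\sup\{\min[\mu_1(u),\mu_2(v)]:x=u+v\}$; $\cap$ is pointwise minimum; inclusion is pointwise $\le$. *)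

From HB Require Import structures.
From mathcomp Require Import all_boot all_order all_algebra.
From mathcomp Require Import all_classical all_reals.
Set Implicit Arguments. Unset Strict Implicit. Unset Printing Implicit Defensive.
Import Order.TTheory GRing.Theory Num.Theory.
Local Open Scope ring_scope.
Local Open Scope classical_set_scope.

Section GammaSemiring.
Variables (S G : nmodType) (op : S -> G -> S -> S).

Definition gamma_semiring_with_zero : Prop :=
  [/\ (forall a b c al, op (a + b) al c = op a al c + op b al c),
      (forall a b c al, op a al (b + c) = op a al b + op a al c),
      (forall a b al be, op a (al + be) b = op a al b + op a be b),
      (forall a b c al be, op a al (op b be c) = op (op a al b) be c)
    & (forall x al y, [/\ op 0 al x = 0, op x al 0 = 0 & op x 0 y = 0])].

(* The function a |-> sum_i x_i alpha_i a of a formal sum sum_i (x_i, alpha_i);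
   two formal sums are rho-related iff these functions coincide, so the
   rho-class of a formal sum is faithfully represented by this function. *)
Definition cls (l : seq (S * G)) : S -> S :=
  fun a => \sum_(p <- l) op p.1 p.2 a.

(* The left operator semiring L = F / rho; F = nonempty formal sums. *)
Definition Lop : Type :=
  {f : S -> S | exists l : seq (S * G), l <> [::] /\ f = cls l}.

Definition Lval (p : Lop) : S -> S := proj1_sig p.

Lemma Lzero_proof : exists l : seq (S * G), l <> [::] /\ cls [:: (0, 0)] = cls l.
Proof. by exists [:: (0, 0)]. Qed.

Definition Lzero : Lop := exist _ (cls [:: (0, 0)]) Lzero_proof.

Definition Ladd_rel (p q r : Lop) : Prop :=
  exists lp lq, Lval p = cls lp /\ Lval q = cls lq /\ Lval r = cls (lp ++ lq).

Definition lmul (lp lq : seq (S * G)) : seq (S * G) :=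
  [seq (op p.1 p.2 q.1, q.2) | p <- lp, q <- lq].

Definition Lmul_rel (p q r : Lop) : Prop :=
  exists lp lq, Lval p = cls lp /\ Lval q = cls lq /\ Lval r = cls (lmul lp lq).

Definition has_left_unity : Prop :=
  exists l : seq (S * G), l <> [::] /\ forall a, cls l a = a.

Definition has_right_unity : Prop :=
  exists l : seq (G * S), forall a, \sum_(p <- l) op a p.1 p.2 = a.

Variable R : realType.

Definition fuzzy {T : Type} (mu : T -> R) : Prop := forall x, 0 <= mu x <= 1.

Definition fuzzy_right_ideal (mu : S -> R) : Prop :=
  [/\ fuzzy mu, (exists x, mu x <> 0), mu 0 = 1,
      (forall x y, Num.min (mu x) (mu y) <= mu (x + y))
    & (forall x g y, mu x <= mu (op x g y))].

Definition fuzzy_left_ideal (mu : S -> R) : Prop :=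
  [/\ fuzzy mu, (exists x, mu x <> 0), mu 0 = 1,
      (forall x y, Num.min (mu x) (mu y) <= mu (x + y))
    & (forall x g y, mu y <= mu (op x g y))].

Definition fuzzy_ideal (mu : S -> R) : Prop :=
  fuzzy_right_ideal mu /\ fuzzy_left_ideal mu.

Definition Lfuzzy_right_ideal (mu : Lop -> R) : Prop :=
  [/\ fuzzy mu, (exists x, mu x <> 0), mu Lzero = 1,
      (forall x y z, Ladd_rel x y z -> Num.min (mu x) (mu y) <= mu z)
    & (forall p q r, Lmul_rel p q r -> mu p <= mu r)].

Definition Lfuzzy_left_ideal (mu : Lop -> R) : Prop :=
  [/\ fuzzy mu, (exists x, mu x <> 0), mu Lzero = 1,
      (forall x y z, Ladd_rel x y z -> Num.min (mu x) (mu y) <= mu z)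
    & (forall p q r, Lmul_rel p q r -> mu q <= mu r)].

Definition Lfuzzy_ideal (mu : Lop -> R) : Prop :=
  Lfuzzy_right_ideal mu /\ Lfuzzy_left_ideal mu.

Definition plus_prime (sigma : S -> R) : Lop -> R :=
  fun p => inf [set sigma (Lval p s) | s in [set: S]].

Definition fsum (m1 m2 : S -> R) : S -> R :=
  fun x => sup [set r | exists u v, x = u + v /\ r = Num.min (m1 u) (m2 v)].

Definition Lfsum (m1 m2 : Lop -> R) : Lop -> R :=
  fun x => sup [set r | exists u v, Ladd_rel u v x /\ r = Num.min (m1 u) (m2 v)].

End GammaSemiring.

Definition fcap {T : Type} {R : realType} (m1 m2 : T -> R) : T -> R :=
  fun x => Num.min (m1 x) (m2 x).

Definition fincl {T : Type} {R : realType} (m1 m2 : T -> R) : Prop :=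
  forall x, m1 x <= m2 x.

Arguments plus_prime [S G] op [R] sigma _.

From mathcomp Require Import all_boot all_order all_algebra.
From mathcomp Require Import all_classical all_reals.
Set Implicit Arguments. Unset Strict Implicit. Unset Printing Implicit Defensive.
Import Order.TTheory GRing.Theory Num.Theory.
Local Open Scope ring_scope.
Local Open Scope classical_set_scope.

(* An element of L is the additive map a |-> sum_i x_i alpha_i a, and sigma^{+'}
   takes the infimum of sigma over its image. With a right unity (gamma_j, f_j) we
   have x = sum_j x gamma_j f_j, so a fuzzy right ideal satisfies
   sigma x = min_j sigma^{+'}([x, gamma_j]); hence sigma |-> sigma^{+'} is injective
   and reflects inclusion, and mu |-> (x |-> min_j mu [x, gamma_j]) is its inverse,
   the left unity being used to write p = sum_i [p e_i, delta_i] in L.  Being an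
   order isomorphism, sigma |-> sigma^{+'} preserves the meet pointwise and the join
   [+], which on both sides is the least fuzzy submonoid above the two summands. *)

Section LeftOperatorSemiring.
Variables (S G : nmodType) (op : S -> G -> S -> S).
Hypothesis gs : gamma_semiring_with_zero op.

Lemma opDl a b c al : op (a + b) al c = op a al c + op b al c.
Proof. by case: gs. Qed.

Lemma opDr a b c al : op a al (b + c) = op a al b + op a al c.
Proof. by case: gs. Qed.

Lemma opA a b c al be : op a al (op b be c) = op (op a al b) be c.
Proof. by case: gs. Qed.

Lemma op0l x al : op 0 al x = 0.
Proof. by case: gs => _ _ _ _ /(_ x al x) []. Qed.

Lemma op0r x al : op x al 0 = 0.
Proof. by case: gs => _ _ _ _ /(_ x al x) []. Qed.

Lemma op_suml (T : Type) (s : seq T) (F : T -> S) g t :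
  op (\sum_(j <- s) F j) g t = \sum_(j <- s) op (F j) g t.
Proof.
elim: s => [|p s IH]; first by rewrite !big_nil op0l.
by rewrite !big_cons opDl IH.
Qed.

Lemma op_sumr (T : Type) (s : seq T) (F : T -> S) x g :
  op x g (\sum_(j <- s) F j) = \sum_(j <- s) op x g (F j).
Proof.
elim: s => [|p s IH]; first by rewrite !big_nil op0r.
by rewrite !big_cons opDr IH.
Qed.

Lemma cls_sum (T : Type) (s : seq T) (F : T -> S) l :
  cls op l (\sum_(j <- s) F j) = \sum_(j <- s) cls op l (F j).
Proof. by rewrite /cls exchange_big; apply: eq_bigr => p _; rewrite op_sumr. Qed.

Lemma clsA l a g t : op (cls op l a) g t = cls op l (op a g t).
Proof. by rewrite /cls op_suml; apply: eq_bigr => p _; rewrite opA. Qed.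

Lemma cls_cat l1 l2 a : cls op (l1 ++ l2) a = cls op l1 a + cls op l2 a.
Proof. by rewrite /cls big_cat. Qed.

Lemma cls_lmul l1 l2 a : cls op (lmul op l1 l2) a = cls op l1 (cls op l2 a).
Proof.
rewrite /cls /lmul big_allpairs_dep; apply: eq_bigr => p _.
by rewrite op_sumr; apply: eq_bigr => q _; rewrite opA.
Qed.

(* Unlike in [Lop], the formal sum may be empty; it then represents [0, 0]. *)
Definition formal_fun (f : S -> S) := exists l, f = cls op l.

Lemma formal_fun_Lop f :
  formal_fun f -> exists l : seq (S * G), l <> [::] /\ f = cls op l.
Proof.
case=> [[|p l] ->]; last by exists (p :: l).
exists [:: (0, 0)]; split => //; apply: funext => a.
by rewrite /cls big_nil big_seq1 op0l.
Qed.

Definition Lop_of f (ff : formal_fun f) : Lop op := exist _ f (formal_fun_Lop ff).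

Lemma Lval_formal (p : Lop op) : formal_fun (Lval p).
Proof. by case: p => f [l [_ E]] /=; exists l. Qed.

Lemma Lval_inj (p q : Lop op) : Lval p = Lval q -> p = q.
Proof.
case: p q => [f ?] [g ?] /= fg; subst g; congr exist; exact: Prop_irrelevance.
Qed.

Lemma formal_funD f g : formal_fun f -> formal_fun g -> formal_fun (fun a => f a + g a).
Proof. by case=> l1 -> [l2 ->]; exists (l1 ++ l2); apply: funext => a; rewrite cls_cat. Qed.

Lemma formal_funM f g : formal_fun f -> formal_fun g -> formal_fun (fun a => f (g a)).
Proof.
by case=> l1 -> [l2 ->]; exists (lmul op l1 l2); apply: funext => a; rewrite cls_lmul.
Qed.

Lemma formal_fun_pair x g : formal_fun (op x g).
Proof. by exists [:: (x, g)]; apply: funext => a; rewrite /cls big_seq1. Qed.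

Lemma formal_fun_sum (T : Type) (s : seq T) (F : T -> Lop op) :
  formal_fun (fun a => \sum_(j <- s) Lval (F j) a).
Proof.
elim: s => [|p s IH].
  by exists [::]; apply: funext => a; rewrite /cls !big_nil.
have [l Hl] := formal_funD (Lval_formal (F p)) IH.
by exists l; rewrite -Hl; apply: funext => a; rewrite big_cons.
Qed.

Lemma formal_fun_sumr f : formal_fun f ->
  forall (T : Type) (s : seq T) (F : T -> S), f (\sum_(j <- s) F j) = \sum_(j <- s) f (F j).
Proof. by case=> l -> T s F; exact: cls_sum. Qed.

Lemma formal_fun_opA f : formal_fun f -> forall a g t, op (f a) g t = f (op a g t).
Proof. by case=> l -> a g t; exact: clsA. Qed.

Definition Ladd (p q : Lop op) := Lop_of (formal_funD (Lval_formal p) (Lval_formal q)).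
Definition Lmul (p q : Lop op) := Lop_of (formal_funM (Lval_formal p) (Lval_formal q)).
Definition Lpair x g := Lop_of (formal_fun_pair x g).

Lemma LpairE x g a : Lval (Lpair x g) a = op x g a.
Proof. by []. Qed.

Lemma LzeroE a : Lval (Lzero op) a = 0.
Proof. by rewrite /= /cls big_seq1 op0l. Qed.

Lemma Lpair0 g : Lpair 0 g = Lzero op.
Proof. by apply: Lval_inj; apply: funext => a; rewrite LpairE LzeroE op0l. Qed.

Lemma Ladd_relP (p q z : Lop op) :
  Ladd_rel p q z <-> (forall a, Lval z a = Lval p a + Lval q a).
Proof.
split; first by case=> lp [lq [-> [-> ->]]] a; rewrite cls_cat.
move=> E; have [lp Ep] := Lval_formal p; have [lq Eq] := Lval_formal q.
exists lp, lq; do 2!split => //; apply: funext => a.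
by rewrite E cls_cat Ep Eq.
Qed.

Lemma Lmul_relP (p q z : Lop op) :
  Lmul_rel p q z <-> (forall a, Lval z a = Lval p (Lval q a)).
Proof.
split; first by case=> lp [lq [-> [-> ->]]] a; rewrite cls_lmul.
move=> E; have [lp Ep] := Lval_formal p; have [lq Eq] := Lval_formal q.
exists lp, lq; do 2!split => //; apply: funext => a.
by rewrite E cls_lmul Ep Eq.
Qed.

Lemma Ladd_rel_Ladd p q : Ladd_rel p q (Ladd p q).
Proof. exact/Ladd_relP. Qed.

Lemma Lmul_rel_Lmul p q : Lmul_rel p q (Lmul p q).
Proof. exact/Lmul_relP. Qed.

Lemma Ladd_rel0r p : Ladd_rel p (Lzero op) p.
Proof. by apply/Ladd_relP => a; rewrite LzeroE addr0. Qed.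

Lemma Ladd_rel0l p : Ladd_rel (Lzero op) p p.
Proof. by apply/Ladd_relP => a; rewrite LzeroE add0r. Qed.

Lemma Lmul_rel_pair x g y d : Lmul_rel (Lpair x g) (Lpair y d) (Lpair (op x g y) d).
Proof. by apply/Lmul_relP => a; rewrite !LpairE opA. Qed.

End LeftOperatorSemiring.

Section BigMin.
Variable R : realType.

Lemma le_bigmin1 (T : eqType) (s : seq T) (F : T -> R) c :
  c <= 1 -> (forall j, j \in s -> c <= F j) -> c <= \big[Num.min/1]_(j <- s) F j.
Proof.
move=> c1; elim: s => [|p s IH] cF; first by rewrite big_nil.
rewrite big_cons le_min cF ?mem_head //= IH // => j js.
by apply: cF; rewrite inE js orbT.
Qed.

Lemma bigmin1_le (T : eqType) (s : seq T) (F : T -> R) j :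
  j \in s -> \big[Num.min/1]_(j <- s) F j <= F j.
Proof.
elim: s => [//|p s IH]; rewrite inE big_cons ge_min => /orP[/eqP->|js].
  by rewrite lexx.
by rewrite IH ?orbT.
Qed.

Lemma bigmin1_le1 (T : Type) (s : seq T) (F : T -> R) :
  \big[Num.min/1]_(j <- s) F j <= 1.
Proof.
elim: s => [|p s IH]; first by rewrite big_nil.
by rewrite big_cons ge_min IH orbT.
Qed.

Lemma le_bigmin1_mono (T : Type) (s : seq T) (F H : T -> R) :
  (forall j, F j <= H j) -> \big[Num.min/1]_(j <- s) F j <= \big[Num.min/1]_(j <- s) H j.
Proof.
move=> FH; elim: s => [|p s IH]; first by rewrite !big_nil.
by rewrite !big_cons le_min2.
Qed.

Lemma min_sup_le (X Y : set R) c : X !=set0 -> Y !=set0 ->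
  (forall a b, X a -> Y b -> Num.min a b <= c) -> Num.min (sup X) (sup Y) <= c.
Proof.
move=> X0 Y0 H; rewrite leNgt; apply/negP; rewrite lt_min => /andP[cX cY].
have [a Xa ca] := sup_gt X0 cX; have [b Yb cb] := sup_gt Y0 cY.
by have := H a b Xa Yb; rewrite leNgt lt_min ca cb.
Qed.

Lemma fuzzy_ge0 (T : Type) (mu : T -> R) x : fuzzy mu -> 0 <= mu x.
Proof. by move=> /(_ x) /andP[]. Qed.

Lemma fuzzy_le1 (T : Type) (mu : T -> R) x : fuzzy mu -> mu x <= 1.
Proof. by move=> /(_ x) /andP[]. Qed.

End BigMin.

Section FuzzySubmonoid.
Variables (R : realType) (S : nmodType).

Definition fuzzy_submonoid (mu : S -> R) :=
  [/\ fuzzy mu, mu 0 = 1 & forall x y, Num.min (mu x) (mu y) <= mu (x + y)].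

Lemma fuzzy_submonoid_bigmin (mu : S -> R) (T : Type) (s : seq T) (F : T -> S) :
  fuzzy_submonoid mu -> \big[Num.min/1]_(j <- s) mu (F j) <= mu (\sum_(j <- s) F j).
Proof.
case=> _ mu0 muD; elim: s => [|p s IH]; first by rewrite !big_nil mu0.
by rewrite !big_cons; apply: le_trans (muD _ _); exact: le_min2.
Qed.

Lemma fsum_ge (sigma tau : S -> R) x u v : fuzzy sigma -> x = u + v ->
  Num.min (sigma u) (tau v) <= fsum sigma tau x.
Proof.
move=> fs E; apply: ub_le_sup; last by exists u, v.
by exists 1 => _ [u' [v' [_ ->]]]; rewrite ge_min fuzzy_le1.
Qed.

Lemma fsum_le (sigma tau : S -> R) x c :
  (forall u v, x = u + v -> Num.min (sigma u) (tau v) <= c) -> fsum sigma tau x <= c.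
Proof.
move=> H; apply: ge_sup; first by exists (Num.min (sigma x) (tau 0)), x, 0; rewrite addr0.
by move=> _ [u [v [E ->]]]; apply: H.
Qed.

Lemma fsum_gel (sigma tau : S -> R) : fuzzy sigma -> tau 0 = 1 ->
  fincl sigma (fsum sigma tau).
Proof.
by move=> fs t0 x; rewrite -[X in X <= _](min_l (fuzzy_le1 x fs)) -t0 fsum_ge ?addr0.
Qed.

Lemma fsum_ger (sigma tau : S -> R) : fuzzy sigma -> fuzzy tau -> sigma 0 = 1 ->
  fincl tau (fsum sigma tau).
Proof.
by move=> fs ft s0 x; rewrite -[X in X <= _](min_r (fuzzy_le1 x ft)) -s0 fsum_ge ?add0r.
Qed.

Lemma fsum_least (sigma tau rho : S -> R) : fuzzy_submonoid rho ->
  fincl sigma rho -> fincl tau rho -> fincl (fsum sigma tau) rho.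
Proof.
case=> _ _ rD sr tr x; apply: fsum_le => u v ->.
by apply: le_trans (rD _ _); exact: le_min2.
Qed.

Lemma fsum_submonoid (sigma tau : S -> R) :
  fuzzy_submonoid sigma -> fuzzy_submonoid tau -> fuzzy_submonoid (fsum sigma tau).
Proof.
move=> [fs s0 sD] [ft t0 tD].
have le1 x : fsum sigma tau x <= 1.
  by apply: fsum_le => u v _; rewrite ge_min fuzzy_le1.
split.
- move=> x; rewrite le1 andbT; apply: le_trans (fsum_gel fs t0 x).
  exact: fuzzy_ge0.
- by apply/le_anti; rewrite le1 -s0 fsum_gel.
- move=> x y; apply: min_sup_le.
  + by exists (Num.min (sigma x) (tau 0)), x, 0; rewrite addr0.
  + by exists (Num.min (sigma y) (tau 0)), y, 0; rewrite addr0.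
  move=> _ _ [u [v [-> ->]]] [u' [v' [-> ->]]].
  apply: le_trans (fsum_ge tau fs (addrACA u v u' v')).
  by rewrite minACA; apply: le_min2.
Qed.

Lemma fcap_submonoid (sigma tau : S -> R) :
  fuzzy_submonoid sigma -> fuzzy_submonoid tau -> fuzzy_submonoid (fcap sigma tau).
Proof.
move=> [fs s0 sD] [ft t0 tD]; split.
- by move=> x; rewrite /fcap le_min !fuzzy_ge0 // ge_min fuzzy_le1.
- by rewrite /fcap s0 t0 minxx.
- by move=> x y; rewrite /fcap minACA; apply: le_min2.
Qed.

End FuzzySubmonoid.

Section FuzzySubmonoidsOfL.
Variables (R : realType) (S G : nmodType) (op : S -> G -> S -> S).
Hypothesis gs : gamma_semiring_with_zero op.

Definition Lfuzzy_submonoid (mu : Lop op -> R) :=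
  [/\ fuzzy mu, mu (Lzero op) = 1
    & forall x y z, Ladd_rel x y z -> Num.min (mu x) (mu y) <= mu z].

Lemma fuzzy_right_idealE (mu : S -> R) : fuzzy_right_ideal op mu <->
  fuzzy_submonoid mu /\ forall x g y, mu x <= mu (op x g y).
Proof.
split; first by case.
by case=> [[f m0 mD] mM]; split=> //; exists 0; rewrite m0; exact/eqP/oner_neq0.
Qed.

Lemma fuzzy_left_idealE (mu : S -> R) : fuzzy_left_ideal op mu <->
  fuzzy_submonoid mu /\ forall x g y, mu y <= mu (op x g y).
Proof.
split; first by case.
by case=> [[f m0 mD] mM]; split=> //; exists 0; rewrite m0; exact/eqP/oner_neq0.
Qed.

Lemma Lfuzzy_right_idealE (mu : Lop op -> R) : Lfuzzy_right_ideal mu <->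
  Lfuzzy_submonoid mu /\ forall p q r, Lmul_rel p q r -> mu p <= mu r.
Proof.
split; first by case.
by case=> [[f m0 mD] mM]; split=> //; exists (Lzero op); rewrite m0; exact/eqP/oner_neq0.
Qed.

Lemma Lfuzzy_left_idealE (mu : Lop op -> R) : Lfuzzy_left_ideal mu <->
  Lfuzzy_submonoid mu /\ forall p q r, Lmul_rel p q r -> mu q <= mu r.
Proof.
split; first by case.
by case=> [[f m0 mD] mM]; split=> //; exists (Lzero op); rewrite m0; exact/eqP/oner_neq0.
Qed.

Lemma Lfuzzy_submonoid_bigmin (mu : Lop op -> R) (T : Type) (s : seq T) (F : T -> Lop op) z :
  Lfuzzy_submonoid mu -> (forall a, Lval z a = \sum_(j <- s) Lval (F j) a) ->
  \big[Num.min/1]_(j <- s) mu (F j) <= mu z.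
Proof.
case=> _ m0 mD; elim: s z => [|p s IH] z Ez.
  rewrite big_nil (_ : z = Lzero op) ?m0 //; apply: Lval_inj.
  by apply: funext => a; rewrite Ez big_nil (LzeroE gs).
pose z' := Lop_of gs (formal_fun_sum s F).
rewrite big_cons; apply: le_trans (mD (F p) z' z _); first exact: le_min2 (IH z' _).
by apply/Ladd_relP => a; rewrite Ez big_cons.
Qed.

Lemma Lfsum_ge (m1 m2 : Lop op -> R) x u v : fuzzy m1 -> Ladd_rel u v x ->
  Num.min (m1 u) (m2 v) <= Lfsum m1 m2 x.
Proof.
move=> f1 E; apply: ub_le_sup; last by exists u, v.
by exists 1 => _ [u' [v' [_ ->]]]; rewrite ge_min fuzzy_le1.
Qed.

Lemma Lfsum_le (m1 m2 : Lop op -> R) x c :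
  (forall u v, Ladd_rel u v x -> Num.min (m1 u) (m2 v) <= c) -> Lfsum m1 m2 x <= c.
Proof.
move=> H; apply: ge_sup; last by move=> _ [u [v [E ->]]]; apply: H.
by exists (Num.min (m1 x) (m2 (Lzero op))), x, (Lzero op); split; first exact: Ladd_rel0r.
Qed.

Lemma Lfsum_gel (m1 m2 : Lop op -> R) : fuzzy m1 -> m2 (Lzero op) = 1 ->
  fincl m1 (Lfsum m1 m2).
Proof.
move=> f1 m20 x; rewrite -[X in X <= _](min_l (fuzzy_le1 x f1)) -m20.
exact/Lfsum_ge/Ladd_rel0r.
Qed.

Lemma Lfsum_ger (m1 m2 : Lop op -> R) : fuzzy m1 -> fuzzy m2 -> m1 (Lzero op) = 1 ->
  fincl m2 (Lfsum m1 m2).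
Proof.
move=> f1 f2 m10 x; rewrite -[X in X <= _](min_r (fuzzy_le1 x f2)) -m10.
exact/Lfsum_ge/Ladd_rel0l.
Qed.

Lemma Lfsum_submonoid (m1 m2 : Lop op -> R) :
  Lfuzzy_submonoid m1 -> Lfuzzy_submonoid m2 -> Lfuzzy_submonoid (Lfsum m1 m2).
Proof.
move=> [f1 m10 m1D] [f2 m20 m2D].
have le1 x : Lfsum m1 m2 x <= 1.
  by apply: Lfsum_le => u v _; rewrite ge_min fuzzy_le1.
have ex0 x : [set r | exists u v, Ladd_rel u v x /\ r = Num.min (m1 u) (m2 v)] !=set0.
  by exists (Num.min (m1 x) (m2 (Lzero op))), x, (Lzero op); split; first exact: Ladd_rel0r.
split.
- move=> x; rewrite le1 andbT; apply: le_trans (Lfsum_gel f1 m20 x).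
  exact: fuzzy_ge0.
- by apply/le_anti; rewrite le1 -m10 Lfsum_gel.
- move=> x y z /Ladd_relP Exyz; apply: min_sup_le; rewrite ?ex0 //.
  move=> _ _ [u [v [/Ladd_relP Ex ->]]] [u' [v' [/Ladd_relP Ey ->]]].
  apply: le_trans (Lfsum_ge m2 f1 (_ : Ladd_rel (Ladd gs u u') (Ladd gs v v') z)).
    by rewrite minACA; apply: le_min2; [apply: m1D | apply: m2D]; exact: Ladd_rel_Ladd.
  by apply/Ladd_relP => a; rewrite Exyz Ex Ey /= addrACA.
Qed.

End FuzzySubmonoidsOfL.

Section IdealOperations.
Variables (R : realType) (S G : nmodType) (op : S -> G -> S -> S).
Hypothesis gs : gamma_semiring_with_zero op.

Lemma fsum_right_ideal (sigma tau : S -> R) : fuzzy_right_ideal op sigma ->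
  fuzzy_right_ideal op tau -> fuzzy_right_ideal op (fsum sigma tau).
Proof.
move=> /fuzzy_right_idealE[sm sM] /fuzzy_right_idealE[tm tM].
apply/fuzzy_right_idealE; split; first exact: fsum_submonoid.
move=> x g y; apply: fsum_le => u v ->; case: sm => fs _ _.
by rewrite (opDl gs); apply: le_trans (fsum_ge tau fs erefl); exact: le_min2.
Qed.

Lemma fsum_left_ideal (sigma tau : S -> R) : fuzzy_left_ideal op sigma ->
  fuzzy_left_ideal op tau -> fuzzy_left_ideal op (fsum sigma tau).
Proof.
move=> /fuzzy_left_idealE[sm sM] /fuzzy_left_idealE[tm tM].
apply/fuzzy_left_idealE; split; first exact: fsum_submonoid.
move=> x g y; apply: fsum_le => u v ->; case: sm => fs _ _.
by rewrite (opDr gs); apply: le_trans (fsum_ge tau fs erefl); exact: le_min2.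
Qed.

Lemma fcap_right_ideal (sigma tau : S -> R) : fuzzy_right_ideal op sigma ->
  fuzzy_right_ideal op tau -> fuzzy_right_ideal op (fcap sigma tau).
Proof.
move=> /fuzzy_right_idealE[sm sM] /fuzzy_right_idealE[tm tM].
apply/fuzzy_right_idealE; split=> [|x g y]; first exact: fcap_submonoid.
exact: le_min2.
Qed.

Lemma fcap_left_ideal (sigma tau : S -> R) : fuzzy_left_ideal op sigma ->
  fuzzy_left_ideal op tau -> fuzzy_left_ideal op (fcap sigma tau).
Proof.
move=> /fuzzy_left_idealE[sm sM] /fuzzy_left_idealE[tm tM].
apply/fuzzy_left_idealE; split=> [|x g y]; first exact: fcap_submonoid.
exact: le_min2.
Qed.

Lemma Lfsum_right_ideal (m1 m2 : Lop op -> R) : Lfuzzy_right_ideal m1 ->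
  Lfuzzy_right_ideal m2 -> Lfuzzy_right_ideal (Lfsum m1 m2).
Proof.
move=> /Lfuzzy_right_idealE[sm sM] /Lfuzzy_right_idealE[tm tM].
apply/Lfuzzy_right_idealE; split; first exact: Lfsum_submonoid.
case: sm => f1 _ _; move=> p q r /(Lmul_relP gs) E.
apply: (Lfsum_le gs) => u v /Ladd_relP Ep.
apply: le_trans (Lfsum_ge m2 f1 (_ : Ladd_rel (Lmul gs u q) (Lmul gs v q) r)).
  by apply: le_min2; [apply: sM | apply: tM]; exact: Lmul_rel_Lmul.
by apply/Ladd_relP => a; rewrite E Ep.
Qed.

End IdealOperations.

Section PlusPrime.
Variables (R : realType) (S G : nmodType) (op : S -> G -> S -> S).
Hypothesis gs : gamma_semiring_with_zero op.
Local Notation pp := (plus_prime op).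

Lemma plus_prime_le (sigma : S -> R) (p : Lop op) s : fuzzy sigma ->
  pp sigma p <= sigma (Lval p s).
Proof.
move=> fs; apply: ge_inf; last by exists s.
by exists 0 => _ [t _ <-]; exact: fuzzy_ge0.
Qed.

Lemma le_plus_prime (sigma : S -> R) (p : Lop op) c :
  (forall s, c <= sigma (Lval p s)) -> c <= pp sigma p.
Proof.
move=> H; apply: lb_le_inf; first by exists (sigma (Lval p 0)), 0.
by move=> _ [t _ <-].
Qed.

Lemma plus_prime_fuzzy (sigma : S -> R) : fuzzy sigma -> fuzzy (pp sigma).
Proof.
move=> fs p; rewrite (le_trans (plus_prime_le p 0 fs)) ?fuzzy_le1 // andbT.
by apply: le_plus_prime => s; exact: fuzzy_ge0.
Qed.

Lemma plus_prime_mono (sigma tau : S -> R) : fuzzy sigma ->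
  fincl sigma tau -> fincl (pp sigma) (pp tau).
Proof.
by move=> fs st p; apply: le_plus_prime => s; exact: le_trans (plus_prime_le p s fs) (st _).
Qed.

Lemma plus_prime_fcap (sigma tau : S -> R) : fuzzy sigma -> fuzzy tau ->
  pp (fcap sigma tau) = fcap (pp sigma) (pp tau).
Proof.
move=> fs ft; have fst : fuzzy (fcap sigma tau).
  by move=> x; rewrite /fcap le_min !fuzzy_ge0 // ge_min fuzzy_le1.
apply: funext => p; apply/le_anti/andP; split; last first.
  by apply: le_plus_prime => s; apply: le_min2; exact: plus_prime_le.
rewrite /fcap le_min; apply/andP; split; apply: plus_prime_mono => // x;
  by rewrite /fcap ge_min lexx ?orbT.
Qed.

Lemma plus_prime_submonoid (sigma : S -> R) :
  fuzzy_submonoid sigma -> Lfuzzy_submonoid (pp sigma).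
Proof.
case=> fs s0 sD; split; first exact: plus_prime_fuzzy.
  apply/le_anti; rewrite (le_trans (plus_prime_le _ 0 fs)) ?(LzeroE gs) ?s0 //=.
  by apply: le_plus_prime => s; rewrite (LzeroE gs) s0.
move=> x y z /Ladd_relP E; apply: le_plus_prime => s; rewrite E.
by apply: le_trans (sD _ _); apply: le_min2; exact: plus_prime_le.
Qed.

Lemma plus_prime_right_ideal (sigma : S -> R) :
  fuzzy_right_ideal op sigma -> Lfuzzy_right_ideal (pp sigma).
Proof.
move=> /fuzzy_right_idealE[[fs s0 sD] _].
apply/Lfuzzy_right_idealE; split; first exact: plus_prime_submonoid.
move=> p q r /(Lmul_relP gs) E; apply: le_plus_prime => s; rewrite E.
exact: plus_prime_le.
Qed.

Lemma fuzzy_left_ideal_formal_fun (sigma : S -> R) f :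
  fuzzy_left_ideal op sigma -> formal_fun op f -> forall y, sigma y <= sigma (f y).
Proof.
move=> /fuzzy_left_idealE[sm sM] [l ->] y.
apply: le_trans (fuzzy_submonoid_bigmin l (fun q => op q.1 q.2 y) sm).
by case: sm => fs _ _; apply: le_bigmin1 => [|q _]; [exact: fuzzy_le1 | exact: sM].
Qed.

Lemma plus_prime_left_ideal (sigma : S -> R) :
  fuzzy_left_ideal op sigma -> Lfuzzy_left_ideal (pp sigma).
Proof.
move=> sl; have /fuzzy_left_idealE[[fs s0 sD] _] := sl.
apply/Lfuzzy_left_idealE; split; first exact: plus_prime_submonoid.
move=> p q r /(Lmul_relP gs) E; apply: le_plus_prime => s; rewrite E.
apply: le_trans (plus_prime_le _ s fs) _.
exact: fuzzy_left_ideal_formal_fun sl (Lval_formal p) _.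
Qed.

End PlusPrime.

Section PlusPrimeInverse.
Variables (R : realType) (S G : nmodType) (op : S -> G -> S -> S).
Hypothesis gs : gamma_semiring_with_zero op.
Variable rl : seq (G * S).
Hypothesis rlK : forall a, \sum_(p <- rl) op a p.1 p.2 = a.
Local Notation pp := (plus_prime op).
Local Notation Lpair := (Lpair gs).

Definition plus_prime_inv (mu : Lop op -> R) (x : S) : R :=
  \big[Num.min/1]_(j <- rl) mu (Lpair x j.1).

(* [x, d] = sum_j [x, gamma_j][f_j, d] because x = sum_j x gamma_j f_j. *)
Lemma plus_prime_inv_le_pair (mu : Lop op -> R) : Lfuzzy_right_ideal mu ->
  forall y d, plus_prime_inv mu y <= mu (Lpair y d).
Proof.
move=> /Lfuzzy_right_idealE[mm mM] y d.
pose F j := Lmul gs (Lpair y j.1) (Lpair j.2 d).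
apply: le_trans (Lfuzzy_submonoid_bigmin gs (s := rl) (F := F) mm _).
  by apply: le_bigmin1_mono => j; apply: mM (Lmul_rel_Lmul _ _ _).
move=> a; rewrite LpairE -[in LHS](rlK y) (op_suml gs).
by apply: eq_bigr => j _; rewrite -(opA gs).
Qed.

Lemma plus_prime_inv_submonoid (mu : Lop op -> R) :
  Lfuzzy_submonoid mu -> fuzzy_submonoid (plus_prime_inv mu).
Proof.
case=> fm m0 mD; split.
- move=> x; rewrite bigmin1_le1 andbT.
  by apply: le_bigmin1 => // j _; exact: fuzzy_ge0.
- by apply/le_anti; rewrite bigmin1_le1 /=; apply: le_bigmin1 => // j _; rewrite Lpair0 m0.
- move=> x y; apply: le_bigmin1 => [|j js]; first by rewrite ge_min bigmin1_le1.
  apply: le_trans (mD (Lpair x j.1) (Lpair y j.1) _ _).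
    by apply: le_min2; exact: bigmin1_le.
  by apply/Ladd_relP => a; rewrite !LpairE (opDl gs).
Qed.

Lemma plus_prime_inv_right_ideal (mu : Lop op -> R) :
  Lfuzzy_right_ideal mu -> fuzzy_right_ideal op (plus_prime_inv mu).
Proof.
move=> mr; have /Lfuzzy_right_idealE[mm mM] := mr.
apply/fuzzy_right_idealE; split; first exact: plus_prime_inv_submonoid.
move=> x g y; apply: le_bigmin1 => [|j _]; first exact: bigmin1_le1.
exact: le_trans (plus_prime_inv_le_pair mr x g) (mM _ _ _ (Lmul_rel_pair gs x g y j.1)).
Qed.

Lemma plus_prime_inv_left_ideal (mu : Lop op -> R) :
  Lfuzzy_left_ideal mu -> fuzzy_left_ideal op (plus_prime_inv mu).
Proof.
move=> /Lfuzzy_left_idealE[mm mM].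
apply/fuzzy_left_idealE; split; first exact: plus_prime_inv_submonoid.
move=> x g y; apply: le_bigmin1 => [|j js]; first exact: bigmin1_le1.
exact: le_trans (bigmin1_le _ js) (mM _ _ _ (Lmul_rel_pair gs x g y j.1)).
Qed.

Lemma plus_primeK (sigma : S -> R) : fuzzy_right_ideal op sigma ->
  plus_prime_inv (pp sigma) = sigma.
Proof.
move=> /fuzzy_right_idealE[sm sM]; have [fs _ _] := sm.
apply: funext => x; apply/le_anti/andP; split.
  apply: le_trans (le_bigmin1_mono _ (fun j => plus_prime_le (Lpair x j.1) j.2 fs)) _.
  by rewrite -[X in _ <= sigma X]rlK; exact: fuzzy_submonoid_bigmin.
apply: le_bigmin1 => [|j _]; first exact: fuzzy_le1.
by apply: le_plus_prime => s; rewrite LpairE.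
Qed.

Lemma plus_prime_inj (sigma tau : S -> R) : fuzzy_right_ideal op sigma ->
  fuzzy_right_ideal op tau -> pp sigma = pp tau -> sigma = tau.
Proof. by move=> sr tr E; rewrite -(plus_primeK sr) -(plus_primeK tr) E. Qed.

Lemma plus_prime_incl (sigma tau : S -> R) : fuzzy_right_ideal op sigma ->
  fuzzy_right_ideal op tau -> fincl sigma tau <-> fincl (pp sigma) (pp tau).
Proof.
move=> sr tr; split; first by case: sr => fs *; exact: plus_prime_mono.
move=> st x; rewrite -(plus_primeK sr) -(plus_primeK tr).
by apply: le_bigmin1_mono => j; exact: st.
Qed.

Variable ll : seq (S * G).
Hypothesis llK : forall a, cls op ll a = a.

(* p = sum_i [p e_i, delta_i] for the left unity sum_i [e_i, delta_i] = ll. *)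
Lemma plus_prime_invK (mu : Lop op -> R) : Lfuzzy_right_ideal mu ->
  pp (plus_prime_inv mu) = mu.
Proof.
move=> mr; have /Lfuzzy_right_idealE[mm mM] := mr; have [fm _ _] := mm.
have fi : fuzzy (plus_prime_inv mu) by case: (plus_prime_inv_submonoid mm).
apply: funext => p; have pf := Lval_formal p; apply/le_anti/andP; split.
  pose F k := Lpair (Lval p k.1) k.2.
  apply: le_trans (Lfuzzy_submonoid_bigmin gs (s := ll) (F := F) mm _).
    apply: le_bigmin1 => [|k _]; first exact: fuzzy_le1 (plus_prime_fuzzy fi).
    exact: le_trans (plus_prime_le _ k.1 fi) (plus_prime_inv_le_pair mr _ _).
  move=> a; rewrite -[in LHS](llK a) /cls (formal_fun_sumr gs pf).
  by apply: eq_bigr => k _; rewrite LpairE (formal_fun_opA gs pf).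
apply: le_plus_prime => s; apply: le_bigmin1 => [|j _]; first exact: fuzzy_le1.
apply: mM (_ : Lmul_rel p (Lpair s j.1) _); apply/(Lmul_relP gs) => a.
by rewrite !LpairE (formal_fun_opA gs pf).
Qed.

(* Both sides are least upper bounds (for [+]), and [pp] is an order isomorphism
   between fuzzy right ideals. *)
Lemma plus_prime_fsum (sigma tau : S -> R) : fuzzy_right_ideal op sigma ->
  fuzzy_right_ideal op tau -> pp (fsum sigma tau) = Lfsum (pp sigma) (pp tau).
Proof.
move=> sr tr; have /fuzzy_right_idealE[sm _] := sr; have /fuzzy_right_idealE[tm _] := tr.
have [fs s0 _] := sm; have [ft t0 _] := tm.
have [fps ps0 _] := plus_prime_submonoid gs sm; have [fpt pt0 _] := plus_prime_submonoid gs tm.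
set B := Lfsum (pp sigma) (pp tau).
have Br : Lfuzzy_right_ideal B.
  by apply: (Lfsum_right_ideal gs); exact: (plus_prime_right_ideal gs).
have rr := plus_prime_inv_right_ideal Br; have rK : pp (plus_prime_inv B) = B.
  exact: plus_prime_invK.
have sum_le : fincl (fsum sigma tau) (plus_prime_inv B).
  have /fuzzy_right_idealE[rm _] := rr; apply: fsum_least rm _ _.
    by apply/(plus_prime_incl sr rr); rewrite rK; exact: Lfsum_gel.
  by apply/(plus_prime_incl tr rr); rewrite rK; exact: Lfsum_ger.
have fsm := fsum_submonoid sm tm; have [ffs _ _] := fsm.
apply: funext => p; apply/le_anti/andP; split.
  by rewrite -rK; exact: plus_prime_mono sum_le p.
have [_ _ ppD] := plus_prime_submonoid gs fsm.
apply: (Lfsum_le gs) => u v E; apply: le_trans (ppD _ _ _ E).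
apply: le_min2; first exact: plus_prime_mono fs (fsum_gel fs t0) u.
exact: plus_prime_mono ft (fsum_ger fs ft s0) v.
Qed.

End PlusPrimeInverse.

Section Correspondence.
Variables (R : realType) (S G : nmodType) (op : S -> G -> S -> S).
Hypothesis gs : gamma_semiring_with_zero op.
Variables (rl : seq (G * S)) (ll : seq (S * G)).
Hypotheses (rlK : forall a, \sum_(p <- rl) op a p.1 p.2 = a) (llK : forall a, cls op ll a = a).
Variables (PS : (S -> R) -> Prop) (PL : (Lop op -> R) -> Prop).
Hypotheses (PS_right : forall sigma, PS sigma -> fuzzy_right_ideal op sigma)
  (PL_right : forall mu, PL mu -> Lfuzzy_right_ideal mu)
  (PS_plus_prime : forall sigma, PS sigma -> PL (plus_prime op sigma))
  (PL_plus_prime_inv : forall mu, PL mu -> PS (plus_prime_inv gs rl mu))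
  (PS_fsum : forall sigma tau, PS sigma -> PS tau -> PS (fsum sigma tau))
  (PS_fcap : forall sigma tau, PS sigma -> PS tau -> PS (fcap sigma tau)).
Local Notation pp := (plus_prime op).

Lemma plus_prime_lattice_iso :
  (forall sigma, PS sigma -> PL (pp sigma)) /\
  (forall sigma tau, PS sigma -> PS tau -> pp sigma = pp tau -> sigma = tau) /\
  (forall mu, PL mu -> exists sigma, PS sigma /\ pp sigma = mu) /\
  (forall sigma tau, PS sigma -> PS tau -> (fincl sigma tau <-> fincl (pp sigma) (pp tau))) /\
  (forall sigma tau, PS sigma -> PS tau ->
    [/\ PS (fsum sigma tau), PS (fcap sigma tau),
        pp (fsum sigma tau) = Lfsum (pp sigma) (pp tau)
      & pp (fcap sigma tau) = fcap (pp sigma) (pp tau)]).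
Proof.
split=> //; split.
  by move=> sigma tau /PS_right sr /PS_right tr; exact: (plus_prime_inj gs rlK sr tr).
split.
  move=> mu Pmu; exists (plus_prime_inv gs rl mu); split; first exact: PL_plus_prime_inv.
  exact: (plus_prime_invK gs rlK llK (PL_right Pmu)).
split.
  by move=> sigma tau /PS_right sr /PS_right tr; exact: (plus_prime_incl gs rlK sr tr).
move=> sigma tau Ps Pt; split; [exact: PS_fsum | exact: PS_fcap | |].
  exact: (plus_prime_fsum gs rlK llK (PS_right Ps) (PS_right Pt)).
by have [fs _ _ _ _] := PS_right Ps; have [ft _ _ _ _] := PS_right Pt; exact: plus_prime_fcap.
Qed.

End Correspondence.

Unset Implicit Arguments.
Local Close Scope classical_set_scope.

Theorem theorem3p4 (R : realType) (S G : nmodType) (op : S -> G -> S -> S) :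
  gamma_semiring_with_zero op -> has_left_unity op -> has_right_unity op ->
  (* fuzzy ideals *)
  ((forall sigma : S -> R, fuzzy_ideal op sigma -> Lfuzzy_ideal (plus_prime op sigma)) /\
   (forall sigma tau : S -> R, fuzzy_ideal op sigma -> fuzzy_ideal op tau ->
      plus_prime op sigma = plus_prime op tau -> sigma = tau) /\
   (forall mu : Lop op -> R, Lfuzzy_ideal mu ->
      exists sigma : S -> R, fuzzy_ideal op sigma /\ plus_prime op sigma = mu) /\
   (forall sigma tau : S -> R, fuzzy_ideal op sigma -> fuzzy_ideal op tau ->
      (fincl sigma tau <-> fincl (plus_prime op sigma) (plus_prime op tau))) /\
   (forall sigma tau : S -> R, fuzzy_ideal op sigma -> fuzzy_ideal op tau ->
      [/\ fuzzy_ideal op (fsum sigma tau), fuzzy_ideal op (fcap sigma tau),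
          plus_prime op (fsum sigma tau) = Lfsum (plus_prime op sigma) (plus_prime op tau)
        & plus_prime op (fcap sigma tau) = fcap (plus_prime op sigma) (plus_prime op tau)])) /\
  (* fuzzy right ideals *)
  ((forall sigma : S -> R, fuzzy_right_ideal op sigma ->
      Lfuzzy_right_ideal (plus_prime op sigma)) /\
   (forall sigma tau : S -> R, fuzzy_right_ideal op sigma -> fuzzy_right_ideal op tau ->
      plus_prime op sigma = plus_prime op tau -> sigma = tau) /\
   (forall mu : Lop op -> R, Lfuzzy_right_ideal mu ->
      exists sigma : S -> R, fuzzy_right_ideal op sigma /\ plus_prime op sigma = mu) /\
   (forall sigma tau : S -> R, fuzzy_right_ideal op sigma -> fuzzy_right_ideal op tau ->
      (fincl sigma tau <-> fincl (plus_prime op sigma) (plus_prime op tau))) /\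
   (forall sigma tau : S -> R, fuzzy_right_ideal op sigma -> fuzzy_right_ideal op tau ->
      [/\ fuzzy_right_ideal op (fsum sigma tau), fuzzy_right_ideal op (fcap sigma tau),
          plus_prime op (fsum sigma tau) = Lfsum (plus_prime op sigma) (plus_prime op tau)
        & plus_prime op (fcap sigma tau) = fcap (plus_prime op sigma) (plus_prime op tau)])).
Proof.
move=> gs [ll [_ llK]] [rl rlK]; split.
  apply: (plus_prime_lattice_iso (gs := gs) rlK llK
    (PS := @fuzzy_ideal S G op R) (PL := @Lfuzzy_ideal S G op R)).
  - by move=> sigma [].
  - by move=> mu [].
  - move=> sigma [sr sl].
    by split; [exact: plus_prime_right_ideal | exact: plus_prime_left_ideal].
  - move=> mu [mr ml].
    by split; [exact: plus_prime_inv_right_ideal | exact: plus_prime_inv_left_ideal].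
  - by move=> sigma tau [? ?] [? ?]; split; [exact: fsum_right_ideal | exact: fsum_left_ideal].
  - by move=> sigma tau [? ?] [? ?]; split; [exact: fcap_right_ideal | exact: fcap_left_ideal].
apply: (plus_prime_lattice_iso (gs := gs) rlK llK
  (PS := @fuzzy_right_ideal S G op R) (PL := @Lfuzzy_right_ideal S G op R)).
- by [].
- by [].
- exact: plus_prime_right_ideal.
- exact: plus_prime_inv_right_ideal.
- exact: fsum_right_ideal.
- exact: fcap_right_ideal.
Qed.
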